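(* Let $R$ be a commutative ring, $n\ge5$, and let $\Delta$ be a non-singular minimal $(d-1)$-complex on $[n-1]$ with $1\le d\le n-4$. Then every nonzero element of $H^0(\overline{\mathcal M}_{0,n},D_\Delta)$ is of the form $F_{(\Delta,w)}$ for some balancing $R$-weighting $w$ of $\Delta$; that is, the balancing weightings of $\Delta$ account for the complete linear system $|D_\Delta|$.
   Context: Fix a Kapranov presentation $\overline{\mathcal M}_{0,n}\cong\operatorname{Bl}\mathbb P^{n-3}$ over $\operatorname{Spec}R$: $\operatorname{Pic}=\mathbb ZH\oplus\bigoplus_I\mathbb ZE_I$ ($I\subseteq[n-1]$, $1\le|I|\le n-4$). Let $P=R[y_1,\dots,y_{n-1},(x_I)_I]$ with $\operatorname{Pic}$-grading $[x_I]=E_I$, $[y_i]=H-\sum_{I\not\ni i}E_I$, and $z_i=\prod_{I\ni i}x_I$; $\operatorname{Cox}(\overline{\mathcal M}_{0,n})=\bigoplus_DH^0(D)$ is identified with $R[(x_I^{\pm1}),(y_i/z_i-y_j/z_j)]\cap P$. A $k$-simplex is a multiset of cardinality $k+1$ with entries in $[n-1]$; a $k$-complex a finite set of distinct $k$-simplices; non-singular means no repeated entries in any simplex. An $R$-weighting assigns nonzero $w_\sigma\in R$; with $c(\sigma,S)=\prod_a\binom{\operatorname{mult}_a\sigma}{\operatorname{mult}_aS}$ it is balancing if $\sum_\sigma c(\sigma,S)w_\sigma=0$ for all multisets $S$ of cardinality $j$, $0\le j\le k-1$. Minimal: balanceable, with no nonempty proper subset balanceable. For a balanced $(d-1)$-complex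 $(\Delta,w)$, $F_{(\Delta,w)}=\big(\prod_Ix_I^{a_I}\big)\sum_{\sigma}w_\sigma y_\sigma/z_\sigma$ where $y_\sigma=\prod y_i^{\operatorname{mult}_i\sigma}$, $z_\sigma=\prod z_i^{\operatorname{mult}_i\sigma}$, $a_I=\max_\sigma\sum_{i\in I}\operatorname{mult}_i\sigma$. $D_\Delta=dH-\sum_I\big(d-\max_{\sigma\in\Delta}\sum_{i\in I}\operatorname{mult}_i(\sigma)\big)E_I$. *)

From HB Require Import structures.
From mathcomp Require Import all_boot all_order all_algebra.
Set Implicit Arguments. Unset Strict Implicit. Unset Printing Implicit Defensive.
Import Order.TTheory GRing.Theory Num.Theory.
Local Open Scope ring_scope.

(* Convention: the index set [n-1] = {1,...,n-1} is modelled by 'I_(n.-1)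
   (element k stands for k+1). *)

(* Valid index sets I for the exceptional divisors E_I:
   I ⊆ [n-1], 1 <= |I| <= n-4. *)
Definition validI (n : nat) (I : {set 'I_n.-1}) : bool :=
  (1 <= #|I|)%N && (#|I| <= n - 4)%N.
Definition Xidx (n : nat) := {I : {set 'I_n.-1} | validI I}.

Definition mset (n : nat) := {ffun 'I_n.-1 -> nat}.
Definition mcard (n : nat) (s : mset n) : nat := (\sum_i s i)%N.

(* Monomials y^a x^b with a : nat exponents on y_1..y_{n-1} and
   integer (Laurent) exponents b on the x_I. *)
Definition mono (n : nat) := (mset n * {ffun Xidx n -> int})%type.
Definition mono_mul (n : nat) (m1 m2 : mono n) : mono n :=
  ([ffun i => m1.1 i + m2.1 i]%N, [ffun I => m1.2 I + m2.2 I]).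
Definition mono1 (n : nat) : mono n := ([ffun => 0%N], [ffun => 0]).

(* Laurent polynomials in R[y_i, x_I^{±1}] given as finite formal sums of
   terms (coefficient, monomial); two of them are equal iff [coef]s agree. *)
Definition laurent (R : comPzRingType) (n : nat) := seq (R * mono n).
Definition coef (R : comPzRingType) (n : nat) (p : laurent R n) (m : mono n) : R :=
  \sum_(t <- p | t.2 == m) t.1.
Definition lmul (R : comPzRingType) (n : nat) (p q : laurent R n) : laurent R n :=
  [seq (a.1 * b.1, mono_mul a.2 b.2) | a <- p, b <- q].

Definition xmono (n : nat) (I : Xidx n) (e : int) : mono n :=
  ([ffun => 0%N], [ffun J => if J == I then e else 0]).
(* the Laurent monomial y_i / z_i, where z_i = prod_{I ∋ i} x_I *)
Definition yzmono (n : nat) (i : 'I_n.-1) : mono n :=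
  ([ffun j => if j == i then 1%N else 0%N],
   [ffun J : Xidx n => if i \in val J then -1 else 0]).

(* The R-subalgebra R[(x_I^{±1}), (y_i/z_i - y_j/z_j)] of R[y, x^{±1}]. *)
Inductive inA (R : comPzRingType) (n : nat) : laurent R n -> Prop :=
| inA_const (r : R) : inA [:: (r, @mono1 n)]
| inA_x (I : Xidx n) : inA [:: (1, xmono I 1)]
| inA_xinv (I : Xidx n) : inA [:: (1, xmono I (-1))]
| inA_gen (i j : 'I_n.-1) : inA [:: (1, yzmono i); (-1, yzmono j)]
| inA_add p q : inA p -> inA q -> inA (p ++ q)
| inA_mul p q : inA p -> inA q -> inA (lmul p q)
| inA_ext p q : inA p -> coef p =1 coef q -> inA q.

Definition inP (R : comPzRingType) (n : nat) (p : laurent R n) : Prop :=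
  forall m : mono n, coef p m != 0 -> forall I, 0 <= m.2 I.

Definition inCox (R : comPzRingType) (n : nat) (p : laurent R n) : Prop :=
  inA p /\ inP p.

(* Pic = Z H ⊕ ⊕_I Z E_I ; a class is (H-coefficient, E_I-coefficients). *)
Definition pic (n : nat) := (int * {ffun Xidx n -> int})%type.
(* [x_I] = E_I, [y_i] = H - sum_{I ∌ i} E_I *)
Definition mono_deg (n : nat) (m : mono n) : pic n :=
  ((\sum_i (m.1 i)%:Z)%R,
   [ffun I : Xidx n => m.2 I - (\sum_(i | i \notin val I) (m.1 i)%:Z)%R]).

Definition inH0 (R : comPzRingType) (n : nat) (D : pic n) (p : laurent R n) : Prop :=
  inCox p /\ forall m, coef p m != 0 -> mono_deg m = D.

Definition lnonzero (R : comPzRingType) (n : nat) (p : laurent R n) : Prop :=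
  exists m, coef p m != 0.

Definition complex (n k : nat) (Delta : seq (mset n)) : Prop :=
  uniq Delta /\ forall s, s \in Delta -> mcard s = k.+1.
Definition nonsingular (n : nat) (Delta : seq (mset n)) : Prop :=
  forall s, s \in Delta -> forall a, (s a <= 1)%N.

Definition cbin (n : nat) (s S : mset n) : nat := (\prod_a 'C(s a, S a))%N.

Definition weighting (R : comPzRingType) (n : nat) (Delta : seq (mset n))
    (w : mset n -> R) : Prop :=
  forall s, s \in Delta -> w s != 0.

Definition balancing (R : comPzRingType) (n k : nat) (Delta : seq (mset n))
    (w : mset n -> R) : Prop :=
  weighting Delta w /\
  forall S : mset n, (mcard S <= k.-1)%N -> (0 < k)%N ->
    \sum_(s <- Delta) (cbin s S)%:R * w s = 0.

Definition balanceable (R : comPzRingType) (n k : nat) (Delta : seq (mset n)) : Prop :=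
  exists w : mset n -> R, balancing k Delta w.

Definition minimal (R : comPzRingType) (n k : nat) (Delta : seq (mset n)) : Prop :=
  Delta != [::] /\ balanceable R k Delta /\
  forall Delta' : seq (mset n), uniq Delta' -> Delta' != [::] ->
    {subset Delta' <= Delta} -> (exists2 s, s \in Delta & s \notin Delta') ->
    ~ balanceable R k Delta'.

Definition aI (n : nat) (Delta : seq (mset n)) (I : Xidx n) : nat :=
  (\max_(s <- Delta) \sum_(i in val I) s i)%N.

Definition DDelta (n d : nat) (Delta : seq (mset n)) : pic n :=
  (d%:Z, [ffun I => - (d%:Z - (aI Delta I)%:Z)]).

(* F_(Delta,w) = (prod_I x_I^{a_I}) sum_sigma w_sigma y_sigma / z_sigma *)
Definition FDw (R : comPzRingType) (n : nat) (Delta : seq (mset n))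
    (w : mset n -> R) : laurent R n :=
  [seq (w s, (s, [ffun I : Xidx n =>
                   (aI Delta I)%:Z - (\sum_(i in val I) s i)%N%:Z]))
  | s <- Delta].

From HB Require Import structures.
From mathcomp Require Import all_boot all_order all_algebra.
From mathcomp Require Import mpoly zify.
Import Order.TTheory GRing.Theory Num.Theory.
Local Open Scope ring_scope.
Set Implicit Arguments. Unset Strict Implicit. Unset Printing Implicit Defensive.

(* A monomial y^sigma x^e of a section f of D_Delta has |sigma| = d and
   e_I = a_I - sum_(i in I) sigma_i.  Nonnegativity of e on singletons makes
   sigma 0/1-valued, and on I = supp sigma it produces a simplex of Delta
   carrying all of its mass on I, i.e. sigma itself; hence f = F_(Delta,w)
   with w the coefficients of f.  Specializing x_I := 1 turns the Cox ring
   into polynomials in y invariant under y |-> y + 1, since its generators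
   are differences; comparing coefficients of y^S, |S| < d, in F(y + 1) and
   F(y) gives the balancing equations.  Finally the support of w is a
   nonempty balanceable subcomplex, hence all of Delta by minimality. *)

Lemma big_pred1_uniq_seq (V : nmodType) (T : eqType) (r : seq T) x (F : T -> V) :
  uniq r -> x \in r -> \sum_(y <- r | y == x) F y = F x.
Proof. by move=> ur xr; rewrite -big_filter (filter_pred1_uniq ur xr) big_seq1. Qed.

Lemma Posz_sum (I : finType) (P : pred I) (F : I -> nat) :
  (\sum_(i | P i) F i)%N%:Z = \sum_(i | P i) (F i)%:Z.
Proof. exact: (big_morph Posz PoszD). Qed.

Lemma leq_bigmax_seqP (I : eqType) (r : seq I) (F : I -> nat) k :
  (0 < k)%N -> (k <= \max_(i <- r) F i)%N -> exists2 i, i \in r & (k <= F i)%N.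
Proof.
move=> k_gt0 k_le; apply/hasP; apply/negPn/negP => /hasPn small.
have : (\max_(i <- r) F i <= k.-1)%N.
  by apply/bigmax_leqP_seq => i ir _; have := small i ir; rewrite /= -ltnNge; lia.
lia.
Qed.

Lemma mset_eq_of_le (n : nat) (x y : mset n) :
  (forall i, x i <= y i)%N -> mcard x = mcard y -> x = y.
Proof.
move=> le_xy eq_card; apply/ffunP => i; apply/eqP.
have [_] := leqif_sum (P := predT) (fun i _ => leqif_eq (le_xy i)).
by move: eq_card; rewrite /mcard => -> /esym; rewrite eqxx => /forallP/(_ i).
Qed.

Section Support.
Variables (n d : nat) (Delta : seq (mset n)).

Definition FDw_xexp (s : mset n) : {ffun Xidx n -> int} :=
  [ffun I => (aI Delta I)%:Z - (\sum_(i in val I) s i)%N%:Z].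

Lemma FDw_xexp_ge0 (s : mset n) I :
  (0 <= FDw_xexp s I) = (\sum_(i in val I) s i <= aI Delta I)%N.
Proof. by rewrite ffunE subr_ge0 lez_nat. Qed.

Lemma mono_deg_DDelta (m : mono n) :
  mono_deg m = DDelta d Delta -> mcard m.1 = d /\ m.2 = FDw_xexp m.1.
Proof.
case=> deg_H /ffunP deg_E.
have card_m : mcard m.1 = d by apply/eqP; rewrite -eqz_nat /mcard Posz_sum deg_H.
split=> //; apply/ffunP => I; have := deg_E I; rewrite !ffunE -!Posz_sum.
have : (\sum_(i in val I) m.1 i + \sum_(i | i \notin val I) m.1 i)%N = d.
  by rewrite -card_m /mcard [in RHS](bigID (fun i => i \in val I)).
set A := (\sum_(i in _) _)%N; set B := (\sum_(i | _) _)%N; move: (m.2 I) => e; lia.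
Qed.

Lemma complex_mem_of_le_aI (x : mset n) :
  (5 <= n)%N -> (1 <= d)%N -> (d <= n - 4)%N ->
  complex d.-1 Delta -> nonsingular Delta -> mcard x = d ->
  (forall I : Xidx n, \sum_(i in val I) x i <= aI Delta I)%N -> x \in Delta.
Proof.
move=> n_ge5 d_ge1 d_le [_ card_Delta] ns card_x le_aI.
have x_le1 i : (x i <= 1)%N.
  have vi : validI [set i] by rewrite /validI cards1; lia.
  have := le_aI (exist _ [set i] vi); rewrite /= big_set1 => /leq_trans; apply.
  by apply/bigmax_leqP_seq => s sD _; rewrite big_set1; exact: ns.
pose I0 := [set i | x i != 0%N].
have x_I0 i : x i = (i \in I0) :> nat.
  by rewrite inE; have := x_le1 i; case: (x i) => [|[]].
have sum_I0 (y : mset n) :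
    (\sum_(i in I0) y i + \sum_(i | i \notin I0) y i)%N = mcard y.
  by rewrite /mcard [in RHS](bigID (mem I0)).
have sum_x : (\sum_(i in I0) x i)%N = #|I0|.
  by rewrite -sum1_card; apply: eq_bigr => i iI0; rewrite x_I0 iI0.
have card_I0 : #|I0| = d.
  rewrite -sum_x -card_x -sum_I0 [X in (_ + X)%N]big1 ?addn0 // => i iI0.
  by rewrite x_I0 (negbTE iI0).
have vI0 : validI I0 by rewrite /validI card_I0; lia.
have [s sD le_s] : exists2 s, s \in Delta & (d <= \sum_(i in I0) s i)%N.
  apply: leq_bigmax_seqP; rewrite // -card_I0 -[X in (X <= _)%N]sum_x.
  exact: (le_aI (exist _ I0 vI0)).
have card_s : mcard s = d by rewrite card_Delta // prednK.
suff -> : x = s by [].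
have out_s : (\sum_(j | j \notin I0) s j = 0)%N.
  apply/eqP; rewrite -leqn0 -(leq_add2l (\sum_(j in I0) s j)) sum_I0 card_s addn0.
  exact: le_s.
apply/esym/mset_eq_of_le; last by rewrite card_s.
move=> i; case: (boolP (i \in I0)) => iI0; first by rewrite x_I0 iI0; exact: ns.
move: (iI0); rewrite inE negbK => /eqP ->.
by rewrite -out_s (bigD1 i) //= leq_addr.
Qed.

Lemma H0_DDelta_support (R : comPzRingType) (f : laurent R n) :
  (5 <= n)%N -> (1 <= d)%N -> (d <= n - 4)%N ->
  complex d.-1 Delta -> nonsingular Delta -> inH0 (DDelta d Delta) f ->
  forall m, coef f m != 0 -> m.1 \in Delta /\ m.2 = FDw_xexp m.1.
Proof.
move=> n_ge5 d_ge1 d_le cx ns [[_ f_P] f_deg] m fm.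
have [card_m exp_m] := mono_deg_DDelta (f_deg m fm).
split=> //; apply: complex_mem_of_le_aI => // I.
by rewrite -FDw_xexp_ge0 -exp_m; exact: f_P.
Qed.

Lemma coef_eq_FDw (R : comPzRingType) (f : laurent R n) :
  uniq Delta -> (forall m, coef f m != 0 -> m.1 \in Delta /\ m.2 = FDw_xexp m.1) ->
  coef f =1 coef (FDw Delta (fun s => coef f (s, FDw_xexp s))).
Proof.
move=> uD supp m; rewrite [RHS]/coef big_map /=.
have [fm|/negPn/eqP fm] := boolP (coef f m != 0).
  case: m fm (supp _ fm) => s e /= fm [sD ->].
  rewrite (eq_bigl (fun t => t == s)) ?big_pred1_uniq_seq // => t.
  by rewrite /= xpair_eqE; case: eqP => [->|]; rewrite ?eqxx ?andbF.
by rewrite fm big1 // => s /eqP ->.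
Qed.

End Support.

Section NontrivialRing.
Variables (R : comPzRingType) (R_nontrivial : (1 : R) != 0).

(* {mpoly _} needs a nontrivial coefficient ring. *)
Definition nzRing of (1 : R) != 0 : Type := R.
HB.instance Definition _ := GRing.ComPzRing.on (nzRing R_nontrivial).
HB.instance Definition _ :=
  GRing.PzSemiRing_isNonZero.Build (nzRing R_nontrivial) R_nontrivial.

End NontrivialRing.

Section Specialization.
Variables (R : comPzRingType) (R_nontrivial : (1 : R) != 0) (n : nat).
Local Notation S := (nzRing R_nontrivial).
Local Notation P := {mpoly S[n.-1]}.

Definition mono_eval (g : 'I_n.-1 -> P) (m : mono n) : P := \prod_i g i ^+ m.1 i.

Definition laurent_eval (g : 'I_n.-1 -> P) (p : laurent R n) : P :=
  \sum_(t <- p) (t.1 : S)%:MP * mono_eval g t.2.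

Variable g : 'I_n.-1 -> P.

Lemma mono_eval_mul m1 m2 : mono_eval g (mono_mul m1 m2) = mono_eval g m1 * mono_eval g m2.
Proof. by rewrite /mono_eval -big_split; apply: eq_bigr => i _; rewrite ffunE exprD. Qed.

Lemma mono_eval_x0 (e : {ffun Xidx n -> int}) : mono_eval g ([ffun => 0%N], e) = 1.
Proof. by rewrite /mono_eval big1 // => i _; rewrite ffunE expr0. Qed.

Lemma mono_eval_yz i : mono_eval g (yzmono i) = g i.
Proof.
rewrite /mono_eval (bigD1 i) //= ffunE eqxx expr1 big1 ?mulr1 // => j /negbTE ji.
by rewrite ffunE ji expr0.
Qed.

Lemma laurent_eval_cat p q : laurent_eval g (p ++ q) = laurent_eval g p + laurent_eval g q.
Proof. exact: big_cat. Qed.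

Lemma laurent_eval_lmul p q : laurent_eval g (lmul p q) = laurent_eval g p * laurent_eval g q.
Proof.
rewrite /laurent_eval /lmul big_allpairs_dep mulr_suml; apply: eq_bigr => a _.
rewrite mulr_sumr; apply: eq_bigr => b _ /=.
rewrite mono_eval_mul (rmorphM (@mpolyC _ S) (a.1 : S) (b.1 : S)).
by rewrite -!mulrA; congr (_ * _); rewrite mulrCA.
Qed.

Lemma laurent_eval_coef p (L : seq (mono n)) : uniq L -> {subset map snd p <= L} ->
  laurent_eval g p = \sum_(m <- L) (coef p m : S)%:MP * mono_eval g m.
Proof.
move=> uL pL; rewrite /coef.
transitivity (\sum_(m <- L) \sum_(t <- p)
                (if m == t.2 then (t.1 : S)%:MP * mono_eval g m else 0)).
  rewrite exchange_big; apply: eq_big_seq => t tp.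
  rewrite -big_mkcond big_pred1_uniq_seq //; apply: pL; exact: map_f.
under [RHS]eq_bigr => m _ do rewrite (rmorph_sum (@mpolyC _ S)) mulr_suml big_mkcond.
by apply: eq_bigr => m _; apply: eq_bigr => t _; rewrite eq_sym.
Qed.

Lemma laurent_eval_ext p q : coef p =1 coef q -> laurent_eval g p = laurent_eval g q.
Proof.
move=> pq; pose L := undup (map snd (p ++ q)).
have pL : {subset map snd p <= L} by move=> m mp; rewrite mem_undup map_cat mem_cat mp.
have qL : {subset map snd q <= L}.
  by move=> m mq; rewrite mem_undup map_cat mem_cat mq orbT.
rewrite (laurent_eval_coef (undup_uniq _) pL) (laurent_eval_coef (undup_uniq _) qL).
by apply: eq_bigr => m _; rewrite pq.
Qed.

End Specialization.

Section Translation.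
Variables (R : comPzRingType) (R_nontrivial : (1 : R) != 0) (n : nat).
Local Notation S := (nzRing R_nontrivial).
Local Notation P := {mpoly S[n.-1]}.

Definition ygen : 'I_n.-1 -> P := fun i => 'X_i.
Definition yshift : 'I_n.-1 -> P := fun i => 'X_i + 1.

(* y_i/z_i - y_j/z_j specializes to 'X_i - 'X_j, which is invariant under 'X_k := 'X_k + 1. *)
Lemma inA_laurent_eval_shift p : inA p -> laurent_eval yshift p = laurent_eval ygen p.
Proof.
elim=> {p} [r|I|I|i j|p q _ ep _ eq|p q _ ep _ eq|p q _ ep pq].
1-3: by rewrite /laurent_eval !big_seq1 !mono_eval_x0.
- rewrite /laurent_eval !big_cons !big_nil !mono_eval_yz /yshift /ygen.
  rewrite (rmorphN1 (@mpolyC _ S)) (rmorph1 (@mpolyC _ S)).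
  by rewrite !addr0 !mul1r !mulN1r opprD addrACA subrr addr0.
- by rewrite !laurent_eval_cat ep eq.
- by rewrite !laurent_eval_lmul ep eq.
- by rewrite -(laurent_eval_ext _ pq) -(laurent_eval_ext _ pq).
Qed.

Definition mnm_of_mset (s : mset n) : 'X_{1..n.-1} := [multinom s i | i < n.-1].

Lemma prod_ygen_mnm (s : mset n) : \prod_i ygen i ^+ s i = 'X_[mnm_of_mset s].
Proof. by rewrite mpolyXE_id; apply: eq_bigr => i _; rewrite mnmE. Qed.

Lemma yshift_expE i a M : (a < M)%N ->
  yshift i ^+ a = \sum_(k < M) 'X_i ^+ k *+ 'C(a, k).
Proof.
move=> a_lt; rewrite /yshift exprD1n.
rewrite (big_ord_widen _ (fun k => 'X_i ^+ k *+ 'C(a, k)) a_lt).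
rewrite big_mkcond /=; apply: eq_bigr => k _.
by case: ifP => // /negbT; rewrite -leqNgt => a_lt_k; rewrite bin_small.
Qed.

Lemma mcoeff_prod_yshift (a s : mset n) :
  (\prod_i yshift i ^+ a i)@_(mnm_of_mset s) = (cbin a s)%:R.
Proof.
pose M := (\sum_i (a i + s i)).+1.
have lt_M i : (a i < M)%N /\ (s i < M)%N.
  rewrite /M !ltnS (bigD1 i) //=; split; first by rewrite -addnA leq_addr.
  exact: leq_trans (leq_addl (a i) _) (leq_addr _ _).
rewrite (eq_bigr _ (fun i _ => yshift_expE i (lt_M i).1)) bigA_distr_bigA /=.
have monoE (phi : {ffun 'I_n.-1 -> 'I_M}) :
    \prod_i ('X_i ^+ phi i *+ 'C(a i, phi i)) =
    ('X_[[multinom (phi i : nat) | i < n.-1]] : P) *+ \prod_i 'C(a i, phi i).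
  by rewrite prodrMn mpolyXE_id; congr (_ *+ _); apply: eq_bigr => i _; rewrite mnmE.
rewrite (eq_bigr _ (fun phi _ => monoE phi)) raddf_sum.
pose phi_s : {ffun 'I_n.-1 -> 'I_M} := [ffun i => Ordinal (lt_M i).2].
rewrite (bigD1 phi_s) //= [X in _ + X]big1 ?addr0 => [|phi /eqP phi_ne].
  rewrite mcoeffMn mcoeffX.
  have -> : [multinom (phi_s i : nat) | i < n.-1] == mnm_of_mset s.
    by apply/eqP/mnmP => i; rewrite !mnmE ffunE.
  by rewrite /cbin -mulr_natl mulr1 !natr_prod; apply: eq_bigr => i _; rewrite ffunE.
rewrite mcoeffMn mcoeffX; case: eqP => [/mnmP phi_s_eq|_]; last by rewrite mul0rn.
by case: phi_ne; apply/ffunP => i; apply: val_inj; have := phi_s_eq i; rewrite !mnmE ffunE.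
Qed.

Lemma mcoeff_FDw_yshift (Delta : seq (mset n)) (w : mset n -> R) (s : mset n) :
  (laurent_eval yshift (FDw Delta w))@_(mnm_of_mset s) =
  \sum_(t <- Delta) w t * (cbin t s)%:R.
Proof.
rewrite /laurent_eval big_map raddf_sum; apply: eq_bigr => t _ /=.
by rewrite mcoeffCM mcoeff_prod_yshift.
Qed.

Lemma mcoeff_FDw_ygen (Delta : seq (mset n)) (w : mset n -> R) (s : mset n) :
  (forall t, t \in Delta -> mcard t != mcard s) ->
  (laurent_eval ygen (FDw Delta w))@_(mnm_of_mset s) = 0.
Proof.
move=> card_ne; rewrite /laurent_eval big_map raddf_sum big_seq big1 // => t tD /=.
rewrite mcoeffCM /mono_eval prod_ygen_mnm mcoeffX.
case: eqP => [/mnmP ts|_]; last by rewrite mulr0.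
case/negP: (card_ne t tD); apply/eqP; apply: eq_bigr => i _.
by have := ts i; rewrite !mnmE.
Qed.

End Translation.

Lemma inA_FDw_balanced (R : comPzRingType) n k (Delta : seq (mset n)) (w : mset n -> R) :
  (forall s, s \in Delta -> mcard s = k) -> inA (FDw Delta w) ->
  forall T : mset n, (mcard T < k)%N -> \sum_(s <- Delta) (cbin s T)%:R * w s = 0.
Proof.
move=> card_Delta wA T card_T.
have [R0|R_nontrivial] := eqVneq (1 : R) 0; first by rewrite -[LHS]mulr1 R0 mulr0.
have := congr1 (mcoeff (mnm_of_mset T)) (inA_laurent_eval_shift R_nontrivial wA).
rewrite mcoeff_FDw_yshift mcoeff_FDw_ygen => [sum0|s sD]; last first.
  by rewrite card_Delta ?gtn_eqF.
rewrite -[RHS]sum0; apply: eq_bigr => s _; exact: mulrC.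
Qed.

Lemma minimal_balancing (R : comPzRingType) n k (Delta : seq (mset n)) (w : mset n -> R) :
  uniq Delta -> minimal R k Delta ->
  (forall T : mset n, (mcard T <= k.-1)%N -> (0 < k)%N ->
     \sum_(s <- Delta) (cbin s T)%:R * w s = 0) ->
  has (fun s => w s != 0) Delta -> balancing k Delta w.
Proof.
move=> uD [_ [_ min_D]] sums0 w_nz; split=> //.
have [/allP //|/allPn [s sD /negPn/eqP ws0]] := boolP (all (fun s => w s != 0) Delta).
pose D' := [seq s <- Delta | w s != 0].
have bal' : balancing k D' w.
  split=> [t|T card_T k_gt0]; first by rewrite mem_filter => /andP[].
  rewrite big_filter big_mkcond -[RHS](sums0 T card_T k_gt0); apply: eq_bigr => t _.
  by case: eqP => //= ->; rewrite mulr0.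
case: (min_D D'); last by exists w.
- exact: filter_uniq.
- by rewrite -size_eq0 size_filter -lt0n -has_count.
- by move=> t; rewrite mem_filter => /andP[].
- by exists s => //; rewrite mem_filter ws0 eqxx.
Qed.

Lemma lnonzero_FDw (R : comPzRingType) n (Delta : seq (mset n)) (w : mset n -> R) :
  lnonzero (FDw Delta w) -> has (fun s => w s != 0) Delta.
Proof.
case=> m; apply: contraNT => /hasPn w0.
rewrite /coef big_map big_seq_cond big1 // => s /andP[sD _]; exact/eqP/negPn/w0.
Qed.

Theorem mainTheorem8 (R : comPzRingType) (n d : nat) (Delta : seq (mset n))
  (hn : (5 <= n)%N) (hd1 : (1 <= d)%N) (hd2 : (d <= n - 4)%N)
  (hcx : complex d.-1 Delta) (hns : nonsingular Delta)
  (hmin : minimal R d.-1 Delta)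
  (f : laurent R n) (hf : inH0 (DDelta d Delta) f) (hf0 : lnonzero f) :
  exists w : mset n -> R, balancing d.-1 Delta w /\ coef f =1 coef (FDw Delta w).
Proof.
pose w s := coef f (s, FDw_xexp Delta s).
have f_w : coef f =1 coef (FDw Delta w).
  exact: coef_eq_FDw hcx.1 (H0_DDelta_support hn hd1 hd2 hcx hns hf).
have card_Delta s : s \in Delta -> mcard s = d by move/hcx.2; rewrite prednK.
have sums0 := inA_FDw_balanced card_Delta (inA_ext hf.1.1 f_w).
exists w; split=> //; apply: minimal_balancing hcx.1 hmin _ _.
- by move=> T card_T d_gt1; apply: sums0; lia.
- by apply: lnonzero_FDw; case: hf0 => m fm; exists m; rewrite -f_w.
Qed.
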